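(* (i) The subalgebras $U_e^+$ and $U_e^-$ are invariant under $S_{e_0}$ and $\tilde S_{e_0}$; the subalgebras $U_f^+$ and $U_f^-$ are invariant under $S_{f_0}$ and $\tilde S_{f_0}$. (ii) For all $x\in U_e$: $P_e^\pm S_{e_0}(x)=S_{e_0}P_e^\pm(x)$ and $P_e^\pm\tilde S_{e_0}(x)=\tilde S_{e_0}P_e^\pm(x)$; for all $x\in U_f$: $P_f^\pm S_{f_0}(x)=S_{f_0}P_f^\pm(x)$ and $P_f^\pm\tilde S_{f_0}(x)=\tilde S_{f_0}P_f^\pm(x)$.
   Context: $U=U_q(\widehat{\mathfrak{sl}}_2)$ in the Drinfeld new realization with currents $e(z)=\sum e_nz^{-n}$, $f(z)=\sum f_nz^{-n}$, relations $(z-q^2w)e(z)e(w)=(q^2z-w)e(w)e(z)$, $(z-q^{-2}w)f(z)f(w)=(q^{-2}z-w)f(w)f(z)$, $k=\psi_0^+$ with $ke_nk^{-1}=q^2e_n$, $kf_nk^{-1}=q^{-2}f_n$; counit $\varepsilon(e_n)=\varepsilon(f_n)=0$, $\varepsilon(k)=1$; $q$ not a root of unity. $U_e$ ($U_f$) is the subalgebra generated by all $e_n$ (all $f_n$); $U_e^+$, $U_e^-$ are generated by $e_n$, $n\ge0$, resp. $n<0$; $U_f^+$, $U_f^-$ by $f_n$, $n>0$, resp. $n\le0$. Multiplication gives linear isomorphisms $U_e^-\otimes U_e^+\to U_e$ and $U_f^-\otimes U_f^+\to U_f$, and the projections are $P_e^-(a_1a_2)=a_1\varepsilon(a_2)$,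 $P_e^+(a_1a_2)=\varepsilon(a_1)a_2$ for $a_1\in U_e^-,a_2\in U_e^+$, and $P_f^-(a_1a_2)=a_1\varepsilon(a_2)$, $P_f^+(a_1a_2)=\varepsilon(a_1)a_2$ for $a_1\in U_f^-,a_2\in U_f^+$. Screenings: $S_{e_0}(x)=e_0x-kxk^{-1}e_0$, $S_{f_0}(x)=xf_0-f_0kxk^{-1}$, $\tilde S_{e_0}(x)=xe_0-e_0k^{-1}xk$, $\tilde S_{f_0}(x)=f_0x-k^{-1}xkf_0$. *)

From HB Require Import structures.
From mathcomp Require Import all_boot all_order all_algebra.
Set Implicit Arguments. Unset Strict Implicit. Unset Printing Implicit Defensive.
Import Order.TTheory GRing.Theory Num.Theory.
Local Open Scope ring_scope.

Section UqDefs.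
Variables (K : fieldType) (U : unitAlgType K).

Inductive gen_subalg (G : U -> Prop) : U -> Prop :=
  | gen_base x : G x -> gen_subalg G x
  | gen_one : gen_subalg G 1
  | gen_lin (c : K) x y : gen_subalg G x -> gen_subalg G y -> gen_subalg G (c *: x + y)
  | gen_mul x y : gen_subalg G x -> gen_subalg G y -> gen_subalg G (x * y).

(** Linear span of the products a * b with a in A, b in B
    (= image of the multiplication map A (x) B -> U). *)
Inductive prod_span (A B : U -> Prop) : U -> Prop :=
  | ps_zero : prod_span A B 0
  | ps_prod a b : A a -> B b -> prod_span A B (a * b)
  | ps_lin (c : K) x y : prod_span A B x -> prod_span A B y -> prod_span A B (c *: x + y).

Definition S_e0 (e0 k x : U) : U := e0 * x - k * x * k^-1 * e0.
Definition S_f0 (f0 k x : U) : U := x * f0 - f0 * k * x * k^-1.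
Definition tS_e0 (e0 k x : U) : U := x * e0 - e0 * k^-1 * x * k.
Definition tS_f0 (f0 k x : U) : U := f0 * x - k^-1 * x * k * f0.

Definition stable_under (A : U -> Prop) (T : U -> U) := forall x, A x -> A (T x).

Definition linear_on (A : U -> Prop) (P : U -> U) :=
  forall (c : K) x y, A x -> A y -> P (c *: x + y) = c *: P x + P y.

End UqDefs.
Arguments stable_under {K U} A T.
Arguments linear_on {K U} A P.

(* The four screening operators are twisted derivations D (x y) = D x * rho y + lam x * D y
   with {lam, rho} = {id, conjugation by k^(+-1)}.  These conjugations rescale every mode by
   q^(+-2), so a twisted derivation preserves a subalgebra generated by modes as soon as it
   maps those modes into it.  Up to a scalar the image of e_n is the q-commutator
   e_0 e_n - q^2 e_n e_0; for n < 0 the current relation rewrites it as minus the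
   q-commutator of e_(n+1) and e_(-1), which vanishes for n = -1 (as 2 <> 0 in K) and lies in
   U_e^- otherwise.  Symmetrically, f_n f_0 - q^-2 f_0 f_n is minus the q-commutator of f_1
   and f_(n-1), which settles f_n with n > 0.
   For (ii), expand D (a1 a2) on the products a1 a2 spanning U_e (resp. U_f): eps vanishes
   on the image of D and is invariant under lam and rho, so P (D x) and D (P x) agree. *)

From HB Require Import structures.
From mathcomp Require Import all_boot all_order all_algebra zify.
Set Implicit Arguments. Unset Strict Implicit. Unset Printing Implicit Defensive.
Import GRing.Theory.
Local Open Scope ring_scope.

Lemma subr_swap (V : zmodType) (x y z t : V) : x - y = z - t -> x - z = y - t.
Proof. by move=> h; rewrite -[x](subrK y) h addrAC [z - t]addrC addrK addrC. Qed.

Lemma oppr_fix_eq0 (K : fieldType) (V : lmodType K) (x : V) :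
  2%:R != 0 :> K -> x = - x -> x = 0.
Proof.
move=> two_neq0 x_opp; apply/eqP.
have : (2%:R : K) *: x == 0 by rewrite scaler_nat mulr2n {1}x_opp addNr.
by rewrite scaler_eq0 (negbTE two_neq0).
Qed.

Section Subalgebras.
Variables (K : fieldType) (U : unitAlgType K).
Implicit Types (G : U -> Prop) (x y : U) (c : K).

Definition modes_in (g : int -> U) (P : int -> Prop) : U -> Prop :=
  fun x => exists2 n, P n & x = g n.

Lemma modes_inW (g : int -> U) P x : modes_in g P x -> exists n, x = g n.
Proof. by case=> n _ ->; exists n. Qed.

Lemma gen_subalg0 G : gen_subalg G 0.
Proof. by have := gen_lin (-1) (gen_one G) (gen_one G); rewrite scaleN1r addNr. Qed.

Lemma gen_subalgZ G c x : gen_subalg G x -> gen_subalg G (c *: x).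
Proof. by move=> Gx; have := gen_lin c Gx (gen_subalg0 G); rewrite addr0. Qed.

Lemma gen_subalgN G x : gen_subalg G x -> gen_subalg G (- x).
Proof. by move/(gen_subalgZ (-1)); rewrite scaleN1r. Qed.

Lemma gen_subalgD G x y : gen_subalg G x -> gen_subalg G y -> gen_subalg G (x + y).
Proof. by move=> Gx Gy; have := gen_lin 1 Gx Gy; rewrite scale1r. Qed.

Lemma gen_subalgB G x y : gen_subalg G x -> gen_subalg G y -> gen_subalg G (x - y).
Proof. by move=> Gx /gen_subalgN; apply: gen_subalgD. Qed.

Lemma gen_subalgS G G' : (forall x, G x -> G' x) ->
  forall x, gen_subalg G x -> gen_subalg G' x.
Proof.
move=> sGG' x; elim=> {x} [x /sGG' /gen_base // | | c x y _ ? _ ? | x y _ ? _ ?].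
- exact: gen_one.
- exact: gen_lin.
- exact: gen_mul.
Qed.

Lemma gen_subalg_prod_span G1 G2 G :
  (forall x, G1 x -> G x) -> (forall x, G2 x -> G x) ->
  forall x, prod_span (gen_subalg G1) (gen_subalg G2) x -> gen_subalg G x.
Proof.
move=> sG1 sG2 x; elim=> {x} [| a1 a2 Ga1 Ga2 | c x y _ ? _ ?].
- exact: gen_subalg0.
- by apply: gen_mul; [apply: gen_subalgS Ga1 | apply: gen_subalgS Ga2].
- exact: gen_lin.
Qed.

Lemma gen_subalg_morph_stable G (s : U -> U) :
  linear s -> monoid_morphism s -> (forall x, G x -> gen_subalg G (s x)) ->
  stable_under (gen_subalg G) s.
Proof.
move=> s_lin [s1 sM] sG x; elim=> {x} [x /sG // | | c x y _ ? _ ? | x y _ ? _ ?].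
- by rewrite s1; apply: gen_one.
- by rewrite s_lin; apply: gen_lin.
- by rewrite sM; apply: gen_mul.
Qed.

Lemma linear_onD (A : U -> Prop) (P : U -> U) x y :
  linear_on A P -> A x -> A y -> P (x + y) = P x + P y.
Proof. by move=> P_lin Ax Ay; have := P_lin 1 x y Ax Ay; rewrite !scale1r. Qed.

Lemma linear_on0 (A : U -> Prop) (P : U -> U) : linear_on A P -> A 0 -> P 0 = 0.
Proof.
move=> P_lin A0; have := linear_onD P_lin A0 A0; rewrite addr0 -{1}[P 0]addr0.
by move/addrI.
Qed.

End Subalgebras.

Section TwistedDerivation.
Variables (K : fieldType) (U : unitAlgType K) (lam rho D : U -> U).
Hypotheses (lamM : monoid_morphism lam) (rhoM : monoid_morphism rho) (D_lin : linear D)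
  (D_M : forall x y, D (x * y) = D x * rho y + lam x * D y).

HB.instance Definition _ := GRing.isLinear.Build K U U *:%R D D_lin.

Lemma twisted_derivation1 : D 1 = 0.
Proof.
have := D_M 1 1; rewrite mulr1 lamM.1 rhoM.1 mulr1 mul1r -{1}[D 1]addr0.
by move/addrI.
Qed.

Lemma gen_subalg_twisted_derivation_stable (G : U -> Prop) :
  stable_under (gen_subalg G) lam -> stable_under (gen_subalg G) rho ->
  (forall x, G x -> gen_subalg G (D x)) -> stable_under (gen_subalg G) D.
Proof.
move=> lamG rhoG DG x; elim=> {x} [x /DG // | | c x y _ ? _ ? | x y Gx ? Gy ?].
- by rewrite twisted_derivation1; apply: gen_subalg0.
- by rewrite D_lin; apply: gen_lin.
- by rewrite D_M; apply: gen_subalgD; apply: gen_mul => //; [apply: rhoG | apply: lamG].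
Qed.

Section Projections.
Variables (eps : {rmorphism U -> K}) (Am Ap A : U -> Prop) (P : U -> U).
Hypotheses (eps_lam : forall x, eps (lam x) = eps x) (eps_rho : forall x, eps (rho x) = eps x)
  (eps_D : forall x, eps (D x) = 0)
  (lamAm : stable_under Am lam) (rhoAp : stable_under Ap rho)
  (DAm : stable_under Am D) (DAp : stable_under Ap D)
  (span_A : forall x, prod_span Am Ap x -> A x) (P_lin : linear_on A P).

Lemma prod_span_twisted_derivation_stable : stable_under (prod_span Am Ap) D.
Proof.
move=> x; elim=> {x} [| a1 a2 Aa1 Aa2 | c x y _ ? _ ?].
- by rewrite linear0; apply: ps_zero.
- rewrite D_M -[D a1 * _]scale1r.
  by apply: ps_lin; apply: ps_prod; auto.
- by rewrite D_lin; apply: ps_lin.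
Qed.

Lemma prod_span_projection_comm :
  (forall a1 a2, Am a1 -> Ap a2 -> P (D (a1 * a2)) = D (P (a1 * a2))) ->
  forall x, prod_span Am Ap x -> P (D x) = D (P x).
Proof.
have span_DA x : prod_span Am Ap x -> A (D x).
  by move/prod_span_twisted_derivation_stable; apply: span_A.
move=> PD_prod x; elim=> {x} [| a1 a2 Aa1 Aa2 | c x y Sx IHx Sy IHy].
- by rewrite linear0 (linear_on0 P_lin (span_A (ps_zero _ _))) linear0.
- exact: PD_prod.
- rewrite D_lin !P_lin ?IHx ?IHy ?D_lin //; by [apply: span_DA | apply: span_A].
Qed.

Lemma left_projection_twisted_derivation_comm :
  (forall a1 a2, Am a1 -> Ap a2 -> P (a1 * a2) = a1 * (eps a2)%:A) ->
  forall x, prod_span Am Ap x -> P (D x) = D (P x).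
Proof.
move=> P_def; apply: prod_span_projection_comm => a1 a2 Aa1 Aa2.
rewrite D_M (linear_onD P_lin) ?P_def; try by [auto | apply/span_A/ps_prod; auto].
by rewrite eps_rho eps_D scale0r mulr0 addr0 !mulr_algr linearZ.
Qed.

Lemma right_projection_twisted_derivation_comm :
  (forall a1 a2, Am a1 -> Ap a2 -> P (a1 * a2) = eps a1 *: a2) ->
  forall x, prod_span Am Ap x -> P (D x) = D (P x).
Proof.
move=> P_def; apply: prod_span_projection_comm => a1 a2 Aa1 Aa2.
rewrite D_M (linear_onD P_lin) ?P_def; try by [auto | apply/span_A/ps_prod; auto].
by rewrite eps_lam eps_D scale0r add0r linearZ.
Qed.

End Projections.
End TwistedDerivation.

Section SkewCommutators.
Variables (K : fieldType) (U : unitAlgType K).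
Implicit Types (a u x y : U) (c d : K) (s : U -> U).

Definition conj_by u x := u * x * u^-1.
Definition skew_comml a s x := a * x - s x * a.
Definition skew_commr a s x := x * a - a * s x.
Definition qcomm c x y := x * y - c *: (y * x).

Lemma conj_by_linear u : linear (conj_by u).
Proof. by move=> c x y; rewrite /conj_by mulrDr mulrDl -scalerAr -scalerAl. Qed.

HB.instance Definition _ u := GRing.isLinear.Build K U U *:%R (conj_by u) (conj_by_linear u).

Lemma conj_by_monoid_morphism u : u \is a GRing.unit -> monoid_morphism (conj_by u).
Proof. by move=> u_unit; split=> [|x y]; rewrite /conj_by ?mulr1 ?divrr // !mulrA divrK. Qed.

Lemma conj_byK u : u \is a GRing.unit -> cancel (conj_by u) (conj_by u^-1).
Proof. by move=> u_unit x; rewrite /conj_by invrK !mulrA mulVr // mul1r divrK. Qed.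

Lemma conj_byV_eigen u d x : u \is a GRing.unit ->
  conj_by u x = d *: x -> conj_by u^-1 x = d^-1 *: x.
Proof.
move=> u_unit ux.
have xE : x = d *: conj_by u^-1 x by rewrite -{1}[x](conj_byK u_unit) ux linearZ.
have [d0 | d_neq0] := eqVneq d 0; last by rewrite {2}xE scalerA mulVf ?scale1r.
by rewrite xE d0 !scale0r scaler0 linear0.
Qed.

Lemma eps_conj_by (eps : {rmorphism U -> K}) u x :
  u \is a GRing.unit -> eps (conj_by u x) = eps x.
Proof.
move=> u_unit; rewrite /conj_by !rmorphM rmorphV // mulrAC divrr ?mul1r //.
exact: rmorph_unit.
Qed.

Lemma gen_subalg_conj_by_stable (G : U -> Prop) u d :
  u \is a GRing.unit -> (forall x, G x -> conj_by u x = d *: x) ->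
  stable_under (gen_subalg G) (conj_by u).
Proof.
move=> u_unit u_diag; apply: gen_subalg_morph_stable.
- exact: conj_by_linear.
- exact: conj_by_monoid_morphism.
- by move=> x Gx; rewrite u_diag //; apply/gen_subalgZ/gen_base.
Qed.

Lemma skew_comml_linear a s : linear s -> linear (skew_comml a s).
Proof.
move=> s_lin c x y; rewrite /skew_comml s_lin mulrDr mulrDl scalerBr opprD addrACA.
by rewrite -scalerAr -scalerAl.
Qed.

Lemma skew_commr_linear a s : linear s -> linear (skew_commr a s).
Proof.
move=> s_lin c x y; rewrite /skew_commr s_lin mulrDr mulrDl scalerBr opprD addrACA.
by rewrite -scalerAr -scalerAl.
Qed.

Lemma skew_commlM a s : {morph s : x y / x * y} ->
  forall x y, skew_comml a s (x * y) = skew_comml a s x * y + s x * skew_comml a s y.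
Proof.
move=> sM x y; rewrite /skew_comml sM mulrBl mulrBr !mulrA.
by rewrite [RHS]addrA subrK.
Qed.

Lemma skew_commrM a s : {morph s : x y / x * y} ->
  forall x y, skew_commr a s (x * y) = skew_commr a s x * s y + x * skew_commr a s y.
Proof.
move=> sM x y; rewrite /skew_commr sM mulrBl mulrBr !mulrA.
by rewrite [RHS]addrC [RHS]addrA subrK.
Qed.

Lemma eps_skew_comml (eps : {rmorphism U -> K}) a s x :
  eps a = 0 -> eps (skew_comml a s x) = 0.
Proof. by move=> eps_a; rewrite rmorphB !rmorphM eps_a mulr0 mul0r subrr. Qed.

Lemma eps_skew_commr (eps : {rmorphism U -> K}) a s x :
  eps a = 0 -> eps (skew_commr a s x) = 0.
Proof. by move=> eps_a; rewrite rmorphB !rmorphM eps_a mulr0 mul0r subrr. Qed.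

Lemma skew_comml_eigen a s d x : s x = d *: x -> skew_comml a s x = qcomm d a x.
Proof. by move=> sx; rewrite /skew_comml /qcomm sx -scalerAl. Qed.

Lemma skew_commr_eigen a s d x : s x = d *: x -> skew_commr a s x = qcomm d x a.
Proof. by move=> sx; rewrite /skew_commr /qcomm sx -scalerAr. Qed.

Lemma qcommC c x y : c != 0 -> qcomm c x y = - c *: qcomm c^-1 y x.
Proof.
move=> c_neq0; rewrite /qcomm scalerBr scalerA mulNr mulfV // scaleN1r opprK.
by rewrite scaleNr addrC.
Qed.

Lemma gen_subalg_qcomm (G : U -> Prop) c x y :
  gen_subalg G x -> gen_subalg G y -> gen_subalg G (qcomm c x y).
Proof. by move=> Gx Gy; apply: gen_subalgB; [|apply: gen_subalgZ]; apply: gen_mul. Qed.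

Lemma S_e0E a u : S_e0 a u =1 skew_comml a (conj_by u).
Proof. by []. Qed.

Lemma tS_e0E a u : tS_e0 a u =1 skew_commr a (conj_by u^-1).
Proof. by move=> x; rewrite /tS_e0 /skew_commr /conj_by invrK !mulrA. Qed.

Lemma S_f0E a u : S_f0 a u =1 skew_commr a (conj_by u).
Proof. by move=> x; rewrite /S_f0 /skew_commr /conj_by !mulrA. Qed.

Lemma tS_f0E a u : tS_f0 a u =1 skew_comml a (conj_by u^-1).
Proof. by move=> x; rewrite /tS_f0 /skew_comml /conj_by invrK. Qed.

End SkewCommutators.

Section Currents.
Variables (K : fieldType) (U : unitAlgType K) (c : K) (g : int -> U).
Hypotheses (two_neq0 : 2%:R != 0 :> K)
  (g_rel : forall a b : int, g (a + 1) * g b - c *: (g a * g (b + 1))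
                            = c *: (g b * g (a + 1)) - g (b + 1) * g a).

Lemma qcomm_current a b : qcomm c (g (a + 1)) (g b) = - qcomm c (g (b + 1)) (g a).
Proof. by rewrite /qcomm opprB; apply: subr_swap. Qed.

Lemma qcomm_current_diag a : qcomm c (g (a + 1)) (g a) = 0.
Proof. exact: oppr_fix_eq0 two_neq0 (qcomm_current a a). Qed.

Lemma qcomm_current_lt0 n :
  n < 0 -> gen_subalg (modes_in g (fun m => m < 0)) (qcomm c (g 0) (g n)).
Proof.
move=> n_lt0; rewrite (_ : g 0 = g (-1 + 1)) //.
have [-> | n_neq] := eqVneq n (-1); first by rewrite qcomm_current_diag; apply: gen_subalg0.
rewrite qcomm_current; apply/gen_subalgN/gen_subalg_qcomm; apply: gen_base.
  by exists (n + 1) => //; lia.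
by exists (-1).
Qed.

Lemma qcomm_current_gt0 n :
  0 < n -> gen_subalg (modes_in g (fun m => 0 < m)) (qcomm c (g n) (g 0)).
Proof.
move=> n_gt0; rewrite -(subrK 1 n).
have [-> | n_neq] := eqVneq (n - 1) 0; first by rewrite qcomm_current_diag; apply: gen_subalg0.
rewrite qcomm_current add0r; apply/gen_subalgN/gen_subalg_qcomm; apply: gen_base.
  by exists 1.
by exists (n - 1) => //; lia.
Qed.

End Currents.

Section TriangularDecomposition.
Variables (K : fieldType) (U : unitAlgType K).
Variables (Gm Gp G : U -> Prop) (eps : {rmorphism U -> K}) (Pm Pp : U -> U).
Local Notation Am := (gen_subalg Gm).
Local Notation Ap := (gen_subalg Gp).
Local Notation A := (gen_subalg G).
Hypotheses (GmG : forall x, Gm x -> G x) (GpG : forall x, Gp x -> G x)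
  (decomp : forall x, A x -> prod_span Am Ap x)
  (Pm_lin : linear_on A Pm) (Pp_lin : linear_on A Pp)
  (Pm_def : forall a1 a2, Am a1 -> Ap a2 -> Pm (a1 * a2) = a1 * (eps a2)%:A)
  (Pp_def : forall a1 a2, Am a1 -> Ap a2 -> Pp (a1 * a2) = eps a1 *: a2).

Definition respects_triangular (D : U -> U) :=
  [/\ stable_under Ap D, stable_under Am D &
      forall x, A x -> Pm (D x) = D (Pm x) /\ Pp (D x) = D (Pp x)].

Lemma twisted_derivation_triangular (lam rho D : U -> U) :
  monoid_morphism lam -> monoid_morphism rho -> linear D ->
  (forall x y, D (x * y) = D x * rho y + lam x * D y) ->
  (forall x, eps (lam x) = eps x) -> (forall x, eps (rho x) = eps x) ->
  (forall x, eps (D x) = 0) ->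
  stable_under Am lam -> stable_under Ap lam -> stable_under Am rho -> stable_under Ap rho ->
  (forall x, Gm x -> Am (D x)) -> (forall x, Gp x -> Ap (D x)) ->
  respects_triangular D.
Proof.
move=> lamM rhoM D_lin D_M eps_lam eps_rho eps_D lamAm lamAp rhoAm rhoAp DGm DGp.
have DAm := gen_subalg_twisted_derivation_stable lamM rhoM D_lin D_M lamAm rhoAm DGm.
have DAp := gen_subalg_twisted_derivation_stable lamM rhoM D_lin D_M lamAp rhoAp DGp.
have span_A := gen_subalg_prod_span GmG GpG.
split=> // x /decomp span_x; split.
- exact: (left_projection_twisted_derivation_comm D_lin D_M eps_rho eps_D
    lamAm rhoAp DAm DAp span_A Pm_lin Pm_def).
- exact: (right_projection_twisted_derivation_comm D_lin D_M eps_lam eps_D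
    lamAm rhoAp DAm DAp span_A Pp_lin Pp_def).
Qed.

Variables (u a : U) (d : K) (Dl Dr : U -> U).
Hypotheses (u_unit : u \is a GRing.unit) (d_neq0 : d != 0)
  (u_diag : forall x, G x -> conj_by u x = d *: x) (eps_a : eps a = 0)
  (DlE : Dl =1 skew_comml a (conj_by u)) (DrE : Dr =1 skew_commr a (conj_by u^-1))
  (qcomm_Gm : forall x, Gm x -> Am (qcomm d a x))
  (qcomm_Gp : forall x, Gp x -> Ap (qcomm d a x)).

Lemma skew_comm_pair_triangular : respects_triangular Dl /\ respects_triangular Dr.
Proof.
have uV_unit : u^-1 \is a GRing.unit by rewrite unitrV.
have uV_diag x : G x -> conj_by u^-1 x = d^-1 *: x by move/u_diag/conj_byV_eigen; apply.
have uAm := gen_subalg_conj_by_stable u_unit (fun x Gmx => u_diag (GmG Gmx)).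
have uAp := gen_subalg_conj_by_stable u_unit (fun x Gpx => u_diag (GpG Gpx)).
have uVAm := gen_subalg_conj_by_stable uV_unit (fun x Gmx => uV_diag x (GmG Gmx)).
have uVAp := gen_subalg_conj_by_stable uV_unit (fun x Gpx => uV_diag x (GpG Gpx)).
have uM := conj_by_monoid_morphism u_unit.
have uVM := conj_by_monoid_morphism uV_unit.
have idM : monoid_morphism (@id U) by [].
split.
- apply: (twisted_derivation_triangular (lam := conj_by u) (rho := id)) => //.
  + by move=> c x y; rewrite !DlE; apply/skew_comml_linear/conj_by_linear.
  + by move=> x y; rewrite !DlE; apply: skew_commlM; apply: uM.2.
  + by move=> x; apply: eps_conj_by.
  + by move=> x; rewrite DlE; apply: eps_skew_comml.
  + by move=> x Gmx; rewrite DlE (skew_comml_eigen _ (u_diag (GmG Gmx))); apply: qcomm_Gm.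
  + by move=> x Gpx; rewrite DlE (skew_comml_eigen _ (u_diag (GpG Gpx))); apply: qcomm_Gp.
- apply: (twisted_derivation_triangular (lam := id) (rho := conj_by u^-1)) => //.
  + by move=> c x y; rewrite !DrE; apply/skew_commr_linear/conj_by_linear.
  + by move=> x y; rewrite !DrE; apply: skew_commrM; apply: uVM.2.
  + by move=> x; apply: eps_conj_by.
  + by move=> x; rewrite DrE; apply: eps_skew_commr.
  + move=> x Gmx; rewrite DrE (skew_commr_eigen _ (uV_diag _ (GmG Gmx))) qcommC ?invr_eq0 //.
    by rewrite invrK; apply/gen_subalgZ/qcomm_Gm.
  + move=> x Gpx; rewrite DrE (skew_commr_eigen _ (uV_diag _ (GpG Gpx))) qcommC ?invr_eq0 //.
    by rewrite invrK; apply/gen_subalgZ/qcomm_Gp.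
Qed.

End TriangularDecomposition.

Theorem mainTheorem6
  (K : fieldType) (U : unitAlgType K) (q : K)
  (e f : int -> U) (k : U) (eps : {rmorphism U -> K})
  (HK : [pchar K] =i pred0)
  (Hq0 : q != 0) (Hq : forall n : nat, (0 < n)%N -> q ^+ n != 1)
  (He : forall a b : int,
     e (a + 1) * e b - q ^+ 2 *: (e a * e (b + 1))
     = q ^+ 2 *: (e b * e (a + 1)) - e (b + 1) * e a)
  (Hf : forall a b : int,
     f (a + 1) * f b - q ^- 2 *: (f a * f (b + 1))
     = q ^- 2 *: (f b * f (a + 1)) - f (b + 1) * f a)
  (Hk : k \is a GRing.unit)
  (Hke : forall n, k * e n * k^-1 = q ^+ 2 *: e n)
  (Hkf : forall n, k * f n * k^-1 = q ^- 2 *: f n)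
  (Heps_lin : forall (c : K) x, eps (c *: x) = c * eps x)
  (Heps_e : forall n, eps (e n) = 0) (Heps_f : forall n, eps (f n) = 0)
  (Heps_k : eps k = 1)
  (Pem Pep Pfm Pfp : U -> U) :
  let Ue := gen_subalg (fun x => exists n, x = e n) in
  let Uep := gen_subalg (fun x => exists2 n : int, (0 <= n)%R & x = e n) in
  let Uem := gen_subalg (fun x => exists2 n : int, (n < 0)%R & x = e n) in
  let Uf := gen_subalg (fun x => exists n, x = f n) in
  let Ufp := gen_subalg (fun x => exists2 n : int, (0 < n)%R & x = f n) in
  let Ufm := gen_subalg (fun x => exists2 n : int, (n <= 0)%R & x = f n) in
  (forall x, Ue x -> prod_span Uem Uep x) ->
  (forall x, Uf x -> prod_span Ufm Ufp x) ->
  linear_on Ue Pem -> linear_on Ue Pep -> linear_on Uf Pfm -> linear_on Uf Pfp ->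
  (forall a1 a2, Uem a1 -> Uep a2 -> Pem (a1 * a2) = a1 * (eps a2)%:A) ->
  (forall a1 a2, Uem a1 -> Uep a2 -> Pep (a1 * a2) = eps a1 *: a2) ->
  (forall a1 a2, Ufm a1 -> Ufp a2 -> Pfm (a1 * a2) = a1 * (eps a2)%:A) ->
  (forall a1 a2, Ufm a1 -> Ufp a2 -> Pfp (a1 * a2) = eps a1 *: a2) ->
  let Se := S_e0 (e 0) k in let tSe := tS_e0 (e 0) k in
  let Sf := S_f0 (f 0) k in let tSf := tS_f0 (f 0) k in
  ([/\ stable_under Uep Se, stable_under Uem Se, stable_under Uep tSe & stable_under Uem tSe] /\
   [/\ stable_under Ufp Sf, stable_under Ufm Sf, stable_under Ufp tSf & stable_under Ufm tSf])
  /\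
  ((forall x, Ue x ->
        [/\ Pem (Se x) = Se (Pem x), Pep (Se x) = Se (Pep x),
            Pem (tSe x) = tSe (Pem x) & Pep (tSe x) = tSe (Pep x)])
    /\ (forall x, Uf x ->
        [/\ Pfm (Sf x) = Sf (Pfm x), Pfp (Sf x) = Sf (Pfp x),
            Pfm (tSf x) = tSf (Pfm x) & Pfp (tSf x) = tSf (Pfp x)])).
Proof.
move=> Ue Uep Uem Uf Ufp Ufm decE decF PemL PepL PfmL PfpL PemE PepE PfmE PfpE Se tSe Sf tSf.
have two_neq0 : 2%:R != 0 :> K by rewrite (pcharf0P K).1.
have q2_neq0 : q ^+ 2 != 0 by rewrite expf_neq0.
have e_diag x : (exists n, x = e n) -> conj_by k x = q ^+ 2 *: x by case=> n ->; apply: Hke.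
have f_diag x : (exists n, x = f n) -> conj_by k^-1 x = q ^+ 2 *: x.
  by case=> n ->; rewrite (conj_byV_eigen Hk (Hkf n)) invrK.
have qcE_m x : modes_in e (fun n => n < 0) x -> Uem (qcomm (q ^+ 2) (e 0) x).
  by case=> n n_lt0 ->; apply: qcomm_current_lt0.
have qcE_p x : modes_in e (fun n => 0 <= n) x -> Uep (qcomm (q ^+ 2) (e 0) x).
  by case=> n n_ge0 ->; apply: gen_subalg_qcomm; apply: gen_base; [exists 0 | exists n].
have qcF_m x : modes_in f (fun n => n <= 0) x -> Ufm (qcomm (q ^+ 2) (f 0) x).
  by case=> n n_le0 ->; apply: gen_subalg_qcomm; apply: gen_base; [exists 0 | exists n].
have qcF_p x : modes_in f (fun n => 0 < n) x -> Ufp (qcomm (q ^+ 2) (f 0) x).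
  by case=> n n_gt0 ->; rewrite qcommC //; apply/gen_subalgZ/qcomm_current_gt0.
have kV_unit : k^-1 \is a GRing.unit by rewrite unitrV.
have SfE : Sf =1 skew_commr (f 0) (conj_by k^-1^-1) by move=> x; rewrite invrK; apply: S_f0E.
have [[Se_p Se_m Se_P] [tSe_p tSe_m tSe_P]] := skew_comm_pair_triangular
  (@modes_inW _ _ e _) (@modes_inW _ _ e _) decE PemL PepL PemE PepE
  Hk q2_neq0 e_diag (Heps_e 0) (S_e0E _ _) (tS_e0E _ _) qcE_m qcE_p.
have [[tSf_p tSf_m tSf_P] [Sf_p Sf_m Sf_P]] := skew_comm_pair_triangular
  (@modes_inW _ _ f _) (@modes_inW _ _ f _) decF PfmL PfpL PfmE PfpE
  kV_unit q2_neq0 f_diag (Heps_f 0) (tS_f0E _ _) SfE qcF_m qcF_p.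
split; first by split; split.
split=> x Ax.
- by case: (Se_P x Ax) (tSe_P x Ax) => ? ? [? ?]; split.
- by case: (Sf_P x Ax) (tSf_P x Ax) => ? ? [? ?]; split.
Qed.
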